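(* Consider the two-period AI value chain game described in the context, and suppose that in period 2 both developers choose openness $\bar\eta$ (so $\eta_2=\tilde\eta_2=\bar\eta$) and the incumbent charges $w_2=w_L$. Define $$\bar{\eta}_H = \frac{k(\theta-w_H)}{2c-k(\theta-w_H)},\qquad \bar{\eta}_L = \frac{k(\theta-w_L)}{2c-k(\theta-w_L)}.$$ (a) $\bar\eta_H\le\bar\eta_L$, and: if the incumbent charges $w_1=w_H$ in period 1, the deployer selects the incumbent in period 2 if and only if $\eta_1\le\bar\eta_H$; if the incumbent charges $w_1=w_L$ in period 1, the deployer selects the incumbent in period 2 if and only if $\eta_1\le\bar\eta_L$. (b) Conditional on the period-2 outcome, the incumbent's total profit is increasing in $\eta_1$: with $\alpha_1=\frac{(1+\eta_1)(\theta-w_1)}{2c}$ and $\alpha_2=\frac{(1+k\alpha_1)(1+\bar\eta)(\theta-w_L)}{2c}$ (the deployer's optimal period-2 effort/engagement when it selects the incumbent), both $\pi_{win}(w_1,\eta_1)=w_1\alpha_1+w_L\alpha_2$ and $\pi_{lose}(w_1,\eta_1)=w_1\alpha_1$ are monotonically increasing in $\eta_1\in[0,\bar\eta]$.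
   Context: Two-period game $t\in\{1,2\}$ with an incumbent developer (developer 1), a deployer, an entrant developer (developer 2), and a unit mass of users. Parameters: $\theta>0$, $c>0$, license fees $0\le w_L\le w_H\le\theta/2$, openness cap $\bar\eta>0$, data flywheel parameter $k\ge 0$. In each period users choose engagement $\alpha_t$ maximizing $Q_t\alpha_t-\alpha_t^2/2$, so $\alpha_t=Q_t$, where $Q_t\ge0$ is the deployer's fine-tuning effort (quality). Period 1: the incumbent chooses a license fee $w_1\in\{w_H,w_L\}$ and openness $\eta_1\in[0,\bar\eta]$; the deployer chooses $Q_1$ to maximize $(\theta-w_1)\alpha_1-\frac{cQ_1^2}{1+\eta_1}$. Period 2: the incumbent chooses $w_2\in\{w_H,w_L\}$ and $\eta_2\in[0,\bar\eta]$; the entrant charges $\tilde w_2=w_L$ and chooses $\tilde\eta_2\in[0,\bar\eta]$. The deployer, for each developer, chooses its effort optimally: with the incumbent its period-2 profit is $(\theta-w_2)Q_2-\frac{cQ_2^2}{(1+k\alpha_1)(1+\eta_2)}$, with the entrant it is $(\theta-w_L)Q_2-\frac{cQ_2^2}{(1+\eta_1)(1+\tilde\eta_2)}$; it selects the incumbent iff the incumbent's optimized profit is at least the entrant's. The incumbent's payoff is $w_1\alpha_1+w_2\alpha_2$ if selected in period 2 and $w_1\alpha_1$ otherwise; the entrant's payoff is $w_L\alpha_2$ if selected and $0$ otherwise. Standing assumption: $k\le\min\Big\{\frac{2c\bar\eta}{(1+\bar\eta)(\theta-w_L)},\ \frac{2c(2\theta-w_H-w_L)(w_H-w_L)}{(\theta-w_H)^2(\theta-w_L)}\Big\}$.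 *)

From Stdlib Require Import Reals Lra.
Open Scope R_scope.

(* Deployer's period-1 profit given fee w1, openness eta1, effort Q1
   (engagement alpha1 = Q1). *)
Definition dep_profit1 (theta c w1 eta1 Q : R) : R :=
  (theta - w1) * Q - c * Q ^ 2 / (1 + eta1).

Definition dep_profit2_inc (theta c k w2 alpha1 eta2 Q : R) : R :=
  (theta - w2) * Q - c * Q ^ 2 / ((1 + k * alpha1) * (1 + eta2)).

Definition dep_profit2_ent (theta c wL eta1 eta2t Q : R) : R :=
  (theta - wL) * Q - c * Q ^ 2 / ((1 + eta1) * (1 + eta2t)).

Definition is_optimal (f : R -> R) (Q : R) : Prop :=
  0 <= Q /\ forall Q', 0 <= Q' -> f Q' <= f Q.

Definition is_max_value (f : R -> R) (v : R) : Prop :=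
  (exists Q, 0 <= Q /\ f Q = v) /\ forall Q, 0 <= Q -> f Q <= v.

Definition selects_incumbent (theta c k w2 wL alpha1 eta1 eta2 eta2t : R) : Prop :=
  exists vI vE,
    is_max_value (dep_profit2_inc theta c k w2 alpha1 eta2) vI /\
    is_max_value (dep_profit2_ent theta c wL eta1 eta2t) vE /\
    vE <= vI.

Definition eta_thr (theta c k w : R) : R :=
  k * (theta - w) / (2 * c - k * (theta - w)).

Definition alpha1_cf (theta c w1 eta1 : R) : R :=
  (1 + eta1) * (theta - w1) / (2 * c).

Definition alpha2_cf (theta c k wL etabar w1 eta1 : R) : R :=
  (1 + k * alpha1_cf theta c w1 eta1) * (1 + etabar) * (theta - wL) / (2 * c).

Definition pi_win (theta c k wL etabar w1 eta1 : R) : R :=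
  w1 * alpha1_cf theta c w1 eta1 + wL * alpha2_cf theta c k wL etabar w1 eta1.

Definition pi_lose (theta c w1 eta1 : R) : R :=
  w1 * alpha1_cf theta c w1 eta1.

(* Every effort problem of the deployer is the concave quadratic
   b Q - c Q^2 / A, maximized at Q = b A / (2c) with value b^2 A / (4c).
   With equal period-2 fees and openness, comparing the two optimized
   profits reduces to comparing the accumulated cost reductions
   1 + eta1 (entrant) and 1 + k alpha1 (incumbent); since
   alpha1 = (1 + eta1)(theta - w1)/(2c), the inequality eta1 <= k alpha1 is
   linear in eta1 and solves to eta1 <= a / (2c - a) with a = k (theta - w1),
   an increasing function of a.  Part (b) is monotonicity of products of
   nonnegative affine functions of eta1. *)
From Stdlib Require Import Reals Lra.
Open Scope R_scope.

Lemma le_div_iff x y d : 0 < d -> x <= y / d <-> x * d <= y.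
Proof.
  intros Hd; split; intro H.
  - apply (Rmult_le_compat_r d) in H; [| lra].
    replace (y / d * d) with y in H by (field; lra); exact H.
  - replace x with (x * d / d) by (field; lra).
    unfold Rdiv; apply Rmult_le_compat_r; [left; apply Rinv_0_lt_compat |]; lra.
Qed.

Definition quad_profit (b c A Q : R) : R := b * Q - c * Q ^ 2 / A.

Section QuadraticProfit.

Variables b c A : R.
Hypothesis Hc : 0 < c.
Hypothesis HA : 0 < A.

Lemma quad_profit_square Q :
  quad_profit b c A Q = b ^ 2 * A / (4 * c) - c * (Q - b * A / (2 * c)) ^ 2 / A.
Proof. unfold quad_profit; field; lra. Qed.

Lemma quad_profit_le_peak Q : quad_profit b c A Q <= b ^ 2 * A / (4 * c).
Proof.
  rewrite quad_profit_square.
  assert (0 <= c * (Q - b * A / (2 * c)) ^ 2 / A).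
  { apply Rle_mult_inv_pos; [apply Rmult_le_pos; [lra | apply pow2_ge_0] | lra]. }
  lra.
Qed.

Lemma quad_profit_at_peak :
  quad_profit b c A (b * A / (2 * c)) = b ^ 2 * A / (4 * c).
Proof. unfold quad_profit; field; lra. Qed.

Hypothesis Hb : 0 <= b.

Lemma quad_argmax_ge0 : 0 <= b * A / (2 * c).
Proof. apply Rle_mult_inv_pos; [apply Rmult_le_pos |]; lra. Qed.

Lemma is_max_value_quad_profit v :
  is_max_value (quad_profit b c A) v <-> v = b ^ 2 * A / (4 * c).
Proof.
  split.
  - intros [[Q [_ <-]] Hmax].
    pose proof (quad_profit_le_peak Q).
    pose proof (Hmax _ quad_argmax_ge0).
    rewrite quad_profit_at_peak in *; lra.
  - intros ->; split.
    + exists (b * A / (2 * c)); split; [exact quad_argmax_ge0 | exact quad_profit_at_peak].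
    + intros Q _; apply quad_profit_le_peak.
Qed.

Lemma is_optimal_quad_profit Q :
  is_optimal (quad_profit b c A) Q -> Q = b * A / (2 * c).
Proof.
  intros [_ Hopt].
  pose proof (Hopt _ quad_argmax_ge0) as Hge.
  rewrite quad_profit_at_peak, quad_profit_square in Hge.
  set (d := Q - b * A / (2 * c)) in Hge.
  assert (Hd : c / A * d ^ 2 <= 0).
  { replace (c / A * d ^ 2) with (c * d ^ 2 / A) by (field; lra); lra. }
  assert (0 < c / A) by (apply Rdiv_lt_0_compat; lra).
  assert (d ^ 2 <= 0) by (apply (Rmult_le_reg_l (c / A)); lra).
  assert (d = 0) by nra.
  unfold d in *; lra.
Qed.

End QuadraticProfit.

Lemma selects_incumbent_iff theta c k w2 wL alpha1 eta1 eta2 eta2t :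
  0 < c -> w2 <= theta -> wL <= theta ->
  0 < (1 + k * alpha1) * (1 + eta2) -> 0 < (1 + eta1) * (1 + eta2t) ->
  selects_incumbent theta c k w2 wL alpha1 eta1 eta2 eta2t <->
  (theta - wL) ^ 2 * ((1 + eta1) * (1 + eta2t)) / (4 * c)
    <= (theta - w2) ^ 2 * ((1 + k * alpha1) * (1 + eta2)) / (4 * c).
Proof.
  intros Hc Hw2 HwL HI HE.
  assert (HmaxI := is_max_value_quad_profit (theta - w2) c _ Hc HI ltac:(lra)).
  assert (HmaxE := is_max_value_quad_profit (theta - wL) c _ Hc HE ltac:(lra)).
  unfold selects_incumbent, dep_profit2_inc, dep_profit2_ent.
  fold (quad_profit (theta - w2) c ((1 + k * alpha1) * (1 + eta2))).
  fold (quad_profit (theta - wL) c ((1 + eta1) * (1 + eta2t))).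
  split.
  - intros [vI [vE [HvI [HvE Hle]]]].
    rewrite <- (proj1 (HmaxI vI) HvI), <- (proj1 (HmaxE vE) HvE); exact Hle.
  - intros Hle; do 2 eexists; split; [apply HmaxI; reflexivity |].
    split; [apply HmaxE; reflexivity | exact Hle].
Qed.

Lemma selects_incumbent_symmetric_iff theta c k wL alpha1 eta1 etabar :
  0 < c -> wL < theta -> 0 <= k * alpha1 -> -1 < eta1 -> -1 < etabar ->
  selects_incumbent theta c k wL wL alpha1 eta1 etabar etabar <->
  eta1 <= k * alpha1.
Proof.
  intros Hc HwL Hka Heta1 Hetabar.
  rewrite selects_incumbent_iff by (try apply Rmult_lt_0_compat; lra).
  set (K := (theta - wL) ^ 2 * (1 + etabar) / (4 * c)).
  assert (HK : 0 < K).
  { apply Rdiv_lt_0_compat; [apply Rmult_lt_0_compat; [apply pow_lt |] |]; lra. }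
  replace ((theta - wL) ^ 2 * ((1 + eta1) * (1 + etabar)) / (4 * c))
    with (K * (1 + eta1)) by (unfold K; field; lra).
  replace ((theta - wL) ^ 2 * ((1 + k * alpha1) * (1 + etabar)) / (4 * c))
    with (K * (1 + k * alpha1)) by (unfold K; field; lra).
  split; intro H.
  - apply Rmult_le_reg_l in H; lra.
  - apply Rmult_le_compat_l; lra.
Qed.

Lemma le_threshold_iff a c eta :
  0 < c -> a < 2 * c ->
  eta <= a * (1 + eta) / (2 * c) <-> eta <= a / (2 * c - a).
Proof. intros Hc Ha; rewrite !le_div_iff by lra; lra. Qed.

Lemma threshold_le a b c :
  0 <= a -> a <= b -> b < 2 * c -> a / (2 * c - a) <= b / (2 * c - b).
Proof.
  intros Ha Hab Hb.
  replace (b / (2 * c - b))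
    with (a / (2 * c - a) + 2 * c * (b - a) / ((2 * c - a) * (2 * c - b)))
    by (field; lra).
  assert (0 <= 2 * c * (b - a) / ((2 * c - a) * (2 * c - b))).
  { apply Rle_mult_inv_pos; [apply Rmult_le_pos | apply Rmult_lt_0_compat]; lra. }
  lra.
Qed.

Lemma selects_incumbent_iff_le_eta_thr theta c k wL w1 eta1 etabar Q1 :
  0 < c -> 0 <= k -> w1 < theta -> wL < theta -> k * (theta - w1) < 2 * c ->
  0 <= eta1 -> -1 < etabar ->
  is_optimal (dep_profit1 theta c w1 eta1) Q1 ->
  selects_incumbent theta c k wL wL Q1 eta1 etabar etabar <->
  eta1 <= eta_thr theta c k w1.
Proof.
  intros Hc Hk Hw1 HwL Hkw Heta1 Hetabar Hopt.
  apply is_optimal_quad_profit in Hopt; try lra.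
  subst Q1.
  assert (0 <= (theta - w1) * (1 + eta1) / (2 * c))
    by (apply quad_argmax_ge0; lra).
  rewrite selects_incumbent_symmetric_iff by (try apply Rmult_le_pos; lra).
  unfold eta_thr; rewrite <- le_threshold_iff by lra.
  replace (k * ((theta - w1) * (1 + eta1) / (2 * c)))
    with (k * (theta - w1) * (1 + eta1) / (2 * c)) by (field; lra).
  reflexivity.
Qed.

Lemma flywheel_margin_lt theta c k wL etabar :
  0 < c -> 0 < etabar -> wL < theta ->
  k <= 2 * c * etabar / ((1 + etabar) * (theta - wL)) ->
  k * (theta - wL) < 2 * c.
Proof.
  intros Hc Hetabar HwL Hk.
  apply (Rmult_le_compat_r (theta - wL)) in Hk; [| lra].
  replace (2 * c * etabar / ((1 + etabar) * (theta - wL)) * (theta - wL))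
    with (2 * c - 2 * c / (1 + etabar)) in Hk by (field; lra).
  assert (0 < 2 * c / (1 + etabar)) by (apply Rdiv_lt_0_compat; lra).
  lra.
Qed.

Section IncumbentProfit.

Variables theta c k wL etabar w1 : R.
Hypothesis Hc : 0 < c.
Hypothesis Hk : 0 <= k.
Hypothesis HwL : 0 <= wL <= theta.
Hypothesis Hw1 : 0 <= w1 <= theta.
Hypothesis Hetabar : 0 <= etabar.

Lemma alpha1_cf_le x y : x <= y -> alpha1_cf theta c w1 x <= alpha1_cf theta c w1 y.
Proof.
  intros Hxy; unfold alpha1_cf, Rdiv.
  apply Rmult_le_compat_r; [left; apply Rinv_0_lt_compat; lra |].
  apply Rmult_le_compat_r; lra.
Qed.

Lemma alpha2_cf_le x y :
  x <= y -> alpha2_cf theta c k wL etabar w1 x <= alpha2_cf theta c k wL etabar w1 y.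
Proof.
  intros Hxy; unfold alpha2_cf, Rdiv.
  apply Rmult_le_compat_r; [left; apply Rinv_0_lt_compat; lra |].
  apply Rmult_le_compat_r; [lra |].
  apply Rmult_le_compat_r; [lra |].
  apply Rplus_le_compat_l, Rmult_le_compat_l, alpha1_cf_le; assumption.
Qed.

Lemma pi_lose_le x y : x <= y -> pi_lose theta c w1 x <= pi_lose theta c w1 y.
Proof. intros Hxy; apply Rmult_le_compat_l, alpha1_cf_le; lra. Qed.

Lemma pi_win_le x y :
  x <= y -> pi_win theta c k wL etabar w1 x <= pi_win theta c k wL etabar w1 y.
Proof.
  intros Hxy; apply Rplus_le_compat.
  - apply pi_lose_le; assumption.
  - apply Rmult_le_compat_l, alpha2_cf_le; lra.
Qed.

End IncumbentProfit.

Theorem lemma1 (theta c wL wH etabar k : R)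
  (Htheta : 0 < theta) (Hc : 0 < c)
  (HwL : 0 <= wL) (HwLH : wL <= wH) (HwH : wH <= theta / 2)
  (Hetabar : 0 < etabar) (Hk : 0 <= k)
  (Hk1 : k <= 2 * c * etabar / ((1 + etabar) * (theta - wL)))
  (Hk2 : k <= 2 * c * (2 * theta - wH - wL) * (wH - wL)
              / ((theta - wH) ^ 2 * (theta - wL))) :
  (* (a) *)
  eta_thr theta c k wH <= eta_thr theta c k wL /\
  (forall eta1 Q1, 0 <= eta1 <= etabar ->
     is_optimal (dep_profit1 theta c wH eta1) Q1 ->
     (selects_incumbent theta c k wL wL Q1 eta1 etabar etabar
        <-> eta1 <= eta_thr theta c k wH)) /\
  (forall eta1 Q1, 0 <= eta1 <= etabar ->
     is_optimal (dep_profit1 theta c wL eta1) Q1 ->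
     (selects_incumbent theta c k wL wL Q1 eta1 etabar etabar
        <-> eta1 <= eta_thr theta c k wL)) /\
  (* (b) *)
  (forall w1, (w1 = wH \/ w1 = wL) ->
     forall x y, 0 <= x -> x <= y -> y <= etabar ->
       pi_win theta c k wL etabar w1 x <= pi_win theta c k wL etabar w1 y /\
       pi_lose theta c w1 x <= pi_lose theta c w1 y).
Proof.
  assert (HkL : k * (theta - wL) < 2 * c)
    by (apply (flywheel_margin_lt theta c k wL etabar); lra).
  assert (HkH : k * (theta - wH) <= k * (theta - wL))
    by (apply Rmult_le_compat_l; lra).
  split; [| split; [| split]].
  - apply threshold_le; [apply Rmult_le_pos | |]; lra.
  - intros eta1 Q1 [Heta1 _].
    apply selects_incumbent_iff_le_eta_thr; lra.
  - intros eta1 Q1 [Heta1 _].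
    apply selects_incumbent_iff_le_eta_thr; lra.
  - intros w1 Hw1 x y _ Hxy _.
    assert (0 <= w1 <= theta) by (destruct Hw1; subst; lra).
    split; [apply pi_win_le | apply pi_lose_le]; lra.
Qed.
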